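(* Let $\mathbf x_1,\dots,\mathbf x_n\in\mathbb R^d$ with $\|\mathbf x_i\|_2=1$ be such that $\mathbf H^\infty$ is positive definite. Suppose $y_i=\alpha(\boldsymbol\beta^\top\mathbf x_i)^p$ for all $i\in[n]$, where $\alpha\in\mathbb R$, $\boldsymbol\beta\in\mathbb R^d$, and $p=1$ or $p=2l$ for some positive integer $l$. Then $$\sqrt{\mathbf y^\top(\mathbf H^\infty)^{-1}\mathbf y}\le3p|\alpha|\,\|\boldsymbol\beta\|_2^p.$$
   Context: $\mathbf y=(y_1,\dots,y_n)^\top$. $\mathbf H^\infty\in\mathbb R^{n\times n}$ is given by $\mathbf H^\infty_{ij}=\mathbb E_{\mathbf w\sim\mathcal N(\mathbf 0,\mathbf I)}[\mathbf x_i^\top\mathbf x_j\mathbb I\{\mathbf w^\top\mathbf x_i\ge0,\mathbf w^\top\mathbf x_j\ge0\}]=\frac{\mathbf x_i^\top\mathbf x_j(\pi-\arccos(\mathbf x_i^\top\mathbf x_j))}{2\pi}$. *)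

From Stdlib Require Export Reals Lra.
Open Scope R_scope.

Fixpoint rsum (n : nat) (f : nat -> R) : R :=
  match n with
  | O => 0
  | S m => rsum m f + f m
  end.

(* vectors in R^d are represented as functions nat -> R (only indices < d matter) *)
Definition dot (d : nat) (u v : nat -> R) : R := rsum d (fun k => u k * v k).
Definition norm2 (d : nat) (u : nat -> R) : R := sqrt (dot d u u).

Definition Hinf (d : nat) (x : nat -> nat -> R) (i j : nat) : R :=
  dot d (x i) (x j) * (PI - acos (dot d (x i) (x j))) / (2 * PI).

(* n x n matrices are functions nat -> nat -> R (indices < n) *)
Definition pos_def (n : nat) (H : nat -> nat -> R) : Prop :=
  forall v : nat -> R, (exists i, (i < n)%nat /\ v i <> 0) ->
    rsum n (fun i => rsum n (fun j => v i * H i j * v j)) > 0.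

Definition is_inverse (n : nat) (H G : nat -> nat -> R) : Prop :=
  forall i j, (i < n)%nat -> (j < n)%nat ->
    rsum n (fun k => H i k * G k j) = (if Nat.eqb i j then 1 else 0) /\
    rsum n (fun k => G i k * H k j) = (if Nat.eqb i j then 1 else 0).

Definition quad (n : nat) (A : nat -> nat -> R) (y : nat -> R) : R :=
  rsum n (fun i => rsum n (fun j => y i * A i j * y j)).

(* Write t_ij = x_i . x_j, so that -1 <= t_ij <= 1 for unit vectors.  Since
   acos t = PI/2 - asin t, the kernel is H_ij = t_ij/4 + t_ij asin(t_ij)/(2 PI).
   The arcsine has the power series  asin t = sum_m a_m t^m  with nonnegative
   coefficients a_m, and every "power Gram form"  Q_m(v) = sum_ij v_i v_j t_ij^m
   is nonnegative (it is a sum of squares, by expanding one factor t_ij).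
   Hence, with v = H^{-1} y and q = y^T H^{-1} y = v^T H v, we get
   q >= c_p Q_p(v) with c_1 = 1/4 and c_p = a_(p-1)/(2 PI); passing to the
   boundary |t| = 1 uses the radial limit r -> 1 of asin(r t).
   Adding beta as an extra point with weight -s to Q_p gives
   2 s sum_i v_i (beta.x_i)^p <= Q_p(v) + s^2 |beta|^(2p); as q = alpha sum_i
   v_i (beta.x_i)^p, the choice s = alpha/c_p yields q <= alpha^2|beta|^(2p)/c_p,
   and a lower bound on the coefficient a_(2l-1) gives 1/c_p <= 9 p^2. *)

From Stdlib Require Import Reals Lra Lia.
From Coquelicot Require Import Coquelicot.
Open Scope R_scope.

Lemma rsum_ext n f g :
  (forall i, (i < n)%nat -> f i = g i) -> rsum n f = rsum n g.
Proof.
  revert f g; induction n as [|n IH]; intros f g H; simpl; auto.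
  rewrite (IH f g) by (intros; apply H; lia). rewrite H by lia. reflexivity.
Qed.

Lemma rsum_plus n f g : rsum n (fun i => f i + g i) = rsum n f + rsum n g.
Proof. induction n; simpl; [ring|]. rewrite IHn; ring. Qed.

Lemma rsum_scal n c f : rsum n (fun i => c * f i) = c * rsum n f.
Proof. induction n; simpl; [ring|]. rewrite IHn; ring. Qed.

Lemma rsum_swap n m (f : nat -> nat -> R) :
  rsum n (fun i => rsum m (fun j => f i j)) = rsum m (fun j => rsum n (fun i => f i j)).
Proof.
  revert m f; induction n as [|n IH]; intros m f; simpl.
  - induction m; simpl; auto. rewrite <- IHm; ring.
  - rewrite IH, <- rsum_plus. reflexivity.
Qed.

Lemma rsum_nonneg n f : (forall i, (i < n)%nat -> 0 <= f i) -> 0 <= rsum n f.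
Proof.
  induction n; intros H; simpl; [lra|].
  pose proof (H n ltac:(lia)). pose proof (IHn ltac:(intros; apply H; lia)). lra.
Qed.

Lemma rsum_ge_term n f m :
  (forall i, (i < n)%nat -> 0 <= f i) -> (m < n)%nat -> f m <= rsum n f.
Proof.
  revert m; induction n as [|n IH]; intros m H Hm; [lia|]. simpl.
  destruct (Nat.eq_dec m n) as [->|Hne].
  - pose proof (rsum_nonneg n f ltac:(intros; apply H; lia)). lra.
  - pose proof (IH m ltac:(intros; apply H; lia) ltac:(lia)). pose proof (H n ltac:(lia)). lra.
Qed.

Lemma rsum_square n w :
  rsum n (fun i => rsum n (fun j => w i * w j)) = rsum n w * rsum n w.
Proof.
  rewrite (rsum_ext n _ (fun i => rsum n w * w i)), rsum_scal; auto.
  intros i _. rewrite rsum_scal. ring.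
Qed.

Lemma rsum_delta n i (y : nat -> R) : (i < n)%nat ->
  rsum n (fun j => (if Nat.eqb i j then 1 else 0) * y j) = y i.
Proof.
  revert i; induction n as [|n IH]; intros i Hi; [lia|]. simpl.
  destruct (Nat.eq_dec i n) as [->|Hne].
  - rewrite Nat.eqb_refl, (rsum_ext n _ (fun _ => 0 * 0)), rsum_scal; [ring|].
    intros j Hj. replace (Nat.eqb n j) with false by (symmetry; apply Nat.eqb_neq; lia). ring.
  - rewrite IH by lia. replace (Nat.eqb i n) with false by (symmetry; apply Nat.eqb_neq; lia). ring.
Qed.

Lemma is_lim_seq_rsum n (f : nat -> nat -> R) (l : nat -> R) :
  (forall i, (i < n)%nat -> is_lim_seq (fun N => f N i) (l i)) ->
  is_lim_seq (fun N => rsum n (f N)) (rsum n l).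
Proof.
  induction n; intros H; simpl.
  - apply is_lim_seq_const.
  - apply is_lim_seq_plus'; [apply IHn; intros; apply H; lia | apply H; lia].
Qed.

Lemma is_lim_seq_const_mul c u (l : R) :
  is_lim_seq u l -> is_lim_seq (fun N => c * u N) (c * l).
Proof. intros H. exact (is_lim_seq_mult' _ _ _ _ (is_lim_seq_const c) H). Qed.

Lemma sum_n_rsum f N : sum_n f N = rsum (S N) f.
Proof.
  induction N.
  - rewrite sum_O. simpl. rewrite Rplus_0_l. reflexivity.
  - rewrite sum_Sn, IHN. reflexivity.
Qed.

Lemma dot_sym d u w : dot d u w = dot d w u.
Proof. unfold dot; apply rsum_ext; intros; ring. Qed.

Lemma dot_nonneg d u : 0 <= dot d u u.
Proof. unfold dot; apply rsum_nonneg; intros; nra. Qed.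

Lemma dot_unit d u : norm2 d u = 1 -> dot d u u = 1.
Proof.
  unfold norm2; intros H. rewrite <- (sqrt_sqrt (dot d u u)) by apply dot_nonneg.
  rewrite H; ring.
Qed.

(* Cauchy-Schwarz for unit vectors, from |u + s w|^2 >= 0 with s = 1, -1. *)
Lemma dot_unit_bound d u w : norm2 d u = 1 -> norm2 d w = 1 -> -1 <= dot d u w <= 1.
Proof.
  intros Hu Hw. apply dot_unit in Hu, Hw.
  assert (Hsq : forall s, 0 <= dot d u u + 2 * s * dot d u w + s * s * dot d w w).
  { intros s.
    replace (dot d u u + 2 * s * dot d u w + s * s * dot d w w)
      with (rsum d (fun k => (u k + s * w k) * (u k + s * w k))).
    - apply rsum_nonneg; intros; apply Rle_0_sqr.
    - unfold dot. rewrite <- !rsum_scal, <- !rsum_plus. apply rsum_ext; intros; ring. }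
  pose proof (Hsq 1). pose proof (Hsq (-1)). lra.
Qed.

Definition gram_power (d m n : nat) (z : nat -> nat -> R) (w : nat -> R) : R :=
  rsum n (fun i => rsum n (fun j => w i * w j * dot d (z i) (z j) ^ m)).

(* Schur's product theorem for Gram powers: expanding one factor z_i . z_j
   writes Q_(m+1)(w) as a sum over coordinates k of Q_m(w_i z_ik). *)
Lemma gram_power_nonneg d m n z w : 0 <= gram_power d m n z w.
Proof.
  revert w; induction m as [|m IH]; intros w; unfold gram_power.
  - rewrite (rsum_ext n _ (fun i => rsum n (fun j => w i * w j))), rsum_square.
    + nra.
    + intros; apply rsum_ext; intros; simpl; ring.
  - rewrite (rsum_ext n _ (fun i => rsum d (fun k => rsum n (fun j =>
        (w i * z i k) * (w j * z j k) * dot d (z i) (z j) ^ m)))).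
    + rewrite rsum_swap. apply rsum_nonneg. intros k _. apply (IH (fun i => w i * z i k)).
    + intros i _. rewrite <- rsum_swap. apply rsum_ext. intros j _.
      rewrite (rsum_ext d _ (fun k => w i * w j * dot d (z i) (z j) ^ m * (z i k * z j k)))
        by (intros; ring).
      rewrite rsum_scal. simpl pow. unfold dot at 1. ring.
Qed.

(* Coefficients of 1/sqrt(1 - t^2) = sum_m b_m t^m: b_0 = 1, b_1 = 0 and
   b_(m+2) = b_m (m+1)/(m+2). *)
Fixpoint isqrt_coef (n : nat) : R :=
  match n with
  | O => 1
  | S O => 0
  | S (S m) => isqrt_coef m * INR (S m) / INR (S (S m))
  end.

(* Coefficients of asin t = sum_m a_m t^m, the antiderivative of the above. *)
Definition asin_coef (n : nat) : R :=
  match n with O => 0 | S m => isqrt_coef m / INR (S m) end.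

(* Both coefficient sequences lie in [0, 1]: nonnegativity drives the whole
   argument, and the bound 1 gives convergence on (-1, 1). *)
Lemma isqrt_coef_bounds n : 0 <= isqrt_coef n <= 1.
Proof.
  enough (H : (0 <= isqrt_coef n <= 1) /\ (0 <= isqrt_coef (S n) <= 1)) by apply H.
  induction n as [|n [IH1 IH2]]; [simpl; lra|]. split; [exact IH2|].
  change (isqrt_coef (S (S n))) with (isqrt_coef n * INR (S n) / INR (S (S n))).
  rewrite (S_INR (S n)). pose proof (lt_0_INR (S n) ltac:(lia)).
  split.
  - apply Rmult_le_pos; [apply Rmult_le_pos; lra | left; apply Rinv_0_lt_compat; lra].
  - apply Rle_div_l; lra || nra.
Qed.

Lemma asin_coef_bounds n : 0 <= asin_coef n <= 1.
Proof.
  destruct n as [|m]; [simpl; lra|]. unfold asin_coef.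
  pose proof (isqrt_coef_bounds m).
  assert (1 <= INR (S m)) by (rewrite S_INR; pose proof (pos_INR m); lra).
  split.
  - apply Rmult_le_pos; [lra | left; apply Rinv_0_lt_compat; lra].
  - apply Rle_div_l; nra.
Qed.

Lemma PS_derive_asin_coef n : PS_derive asin_coef n = isqrt_coef n.
Proof.
  unfold PS_derive, asin_coef. pose proof (lt_0_INR (S n) ltac:(lia)). field; lra.
Qed.

Lemma CV_radius_bounded_coef (a : nat -> R) :
  (forall n, Rabs (a n) <= 1) -> forall t, -1 < t < 1 -> Rbar_lt (Rabs t) (CV_radius a).
Proof.
  intros Ha t Ht.
  assert (H1 : Rbar_le 1 (CV_radius a)).
  { apply (proj1 (CV_radius_bounded a)). exists 1. intro n. rewrite pow1, Rmult_1_r. apply Ha. }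
  destruct (CV_radius a) as [r| |]; simpl in *; auto.
  apply Rlt_le_trans with 1; auto. apply Rabs_def1; lra.
Qed.

Lemma isqrt_coef_radius t : -1 < t < 1 -> Rbar_lt (Rabs t) (CV_radius isqrt_coef).
Proof.
  apply CV_radius_bounded_coef. intro n. pose proof (isqrt_coef_bounds n).
  rewrite Rabs_pos_eq; lra.
Qed.

Lemma asin_coef_radius t : -1 < t < 1 -> Rbar_lt (Rabs t) (CV_radius asin_coef).
Proof.
  apply CV_radius_bounded_coef. intro n. pose proof (asin_coef_bounds n).
  rewrite Rabs_pos_eq; lra.
Qed.

(* The series B(t) = sum b_m t^m solves (1 - t^2) B'(t) = t B(t). *)
Lemma isqrt_series_ode t : -1 < t < 1 ->
  PSeries (PS_derive isqrt_coef) t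
  = t * (t * PSeries (PS_derive isqrt_coef) t) + t * PSeries isqrt_coef t.
Proof.
  intros Ht.
  assert (E1 : ex_pseries isqrt_coef t)
    by (apply CV_radius_inside, isqrt_coef_radius, Ht).
  assert (E2 : ex_pseries (PS_derive isqrt_coef) t)
    by (apply ex_pseries_derive, isqrt_coef_radius, Ht).
  rewrite <- !PSeries_incr_1, <- PSeries_plus by (repeat apply ex_pseries_incr_1; auto).
  apply PSeries_ext. intro n.
  unfold PS_plus, PS_incr_1, PS_derive, plus, zero.
  destruct n as [|[|m]].
  - simpl. ring.
  - simpl. field.
  - cbn -[INR isqrt_coef]. unfold mult; simpl mult.
    change (isqrt_coef (S (S (S m))))
      with (isqrt_coef (S m) * INR (S (S m)) / INR (S (S (S m)))).
    pose proof (lt_0_INR (S (S (S m))) ltac:(lia)).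
    rewrite !(S_INR (S (S m))), !(S_INR (S m)), !(S_INR m) in *.
    field. lra.
Qed.

Lemma const_on_unit_interval (f : R -> R) :
  (forall c, -1 < c < 1 -> is_derive f c 0) -> forall t, -1 < t < 1 -> f t = f 0.
Proof.
  intros Hd t Ht.
  destruct (MVT_cor4 f (fun _ => 0) 0 (Rabs t)) with (b := t) as [c [Hc _]].
  - intros c Hc. apply Hd. rewrite Rminus_0_r in Hc.
    revert Hc; unfold Rabs; repeat destruct Rcase_abs; intros; lra.
  - rewrite Rminus_0_r; lra.
  - lra.
Qed.

(* The series B is indeed 1/sqrt(1 - t^2): B(t) sqrt(1 - t^2) has zero
   derivative by the differential equation, and equals 1 at t = 0. *)
Lemma isqrt_series_closed t : -1 < t < 1 ->
  PSeries isqrt_coef t * sqrt (1 - t * t) = 1.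
Proof.
  intros Ht.
  rewrite (const_on_unit_interval (fun t => PSeries isqrt_coef t * sqrt (1 - t * t))); auto.
  { rewrite PSeries_0, Rmult_0_r, Rminus_0_r, sqrt_1. simpl. ring. }
  clear t Ht. intros t Ht.
  assert (HB : is_derive (PSeries isqrt_coef) t (PSeries (PS_derive isqrt_coef) t))
    by (apply is_derive_PSeries, isqrt_coef_radius, Ht).
  assert (Hpos : 0 < 1 - t * t) by nra.
  assert (HS : is_derive (fun t => sqrt (1 - t * t)) t (- (2 * t) / (2 * sqrt (1 - t * t)))).
  { apply (is_derive_sqrt (fun t => 1 - t * t)); [|exact Hpos]. auto_derive; auto. ring. }
  pose proof (is_derive_mult _ _ t _ _ HB HS Rmult_comm) as HM.
  unfold plus, mult in HM; simpl in HM.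
  replace 0 with (PSeries (PS_derive isqrt_coef) t * sqrt (1 - t * t) +
     PSeries isqrt_coef t * (- (2 * t) / (2 * sqrt (1 - t * t)))); [exact HM|].
  pose proof (isqrt_series_ode t Ht) as Hode.
  assert (Hs : 0 < sqrt (1 - t * t)) by (apply sqrt_lt_R0; lra).
  pose proof (sqrt_sqrt (1 - t * t) (Rlt_le _ _ Hpos)) as Hss.
  apply (Rmult_eq_reg_r (sqrt (1 - t * t))); [|lra].
  field_simplify; [|lra].
  rewrite <- Rsqr_pow2; unfold Rsqr; rewrite Hss. nra.
Qed.

(* asin t = sum_m a_m t^m on (-1, 1): both sides vanish at 0 and have the
   derivative 1/sqrt(1 - t^2). *)
Lemma asin_series t : -1 < t < 1 -> PSeries asin_coef t = asin t.
Proof.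
  intros Ht. apply Rminus_diag_uniq.
  rewrite (const_on_unit_interval (fun t => PSeries asin_coef t - asin t)); auto.
  { rewrite PSeries_0, asin_0. simpl. ring. }
  clear t Ht. intros t Ht.
  assert (HA : is_derive (PSeries asin_coef) t (PSeries (PS_derive asin_coef) t))
    by (apply is_derive_PSeries, asin_coef_radius, Ht).
  assert (Has : is_derive asin t (1 / sqrt (1 - t²))).
  { apply is_derive_Reals, (derive_pt_eq_1 _ _ _ (derivable_pt_asin t Ht)).
    apply derive_pt_asin. }
  pose proof (is_derive_minus _ _ t _ _ HA Has) as HM.
  unfold minus, plus, opp in HM; simpl in HM.
  replace 0 with (PSeries (PS_derive asin_coef) t + - (1 / sqrt (1 - t²))); [exact HM|].
  rewrite (PSeries_ext _ isqrt_coef) by apply PS_derive_asin_coef.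
  pose proof (isqrt_series_closed t Ht).
  assert (0 < sqrt (1 - t * t)) by (apply sqrt_lt_R0; nra).
  unfold Rsqr. apply (Rmult_eq_reg_r (sqrt (1 - t * t))); [|lra].
  field_simplify; lra.
Qed.

Lemma asin_partial_sums t : -1 < t < 1 ->
  is_lim_seq (fun N => rsum (S N) (fun k => asin_coef k * t ^ k)) (asin t).
Proof.
  intros Ht.
  assert (E : ex_pseries asin_coef t) by (apply CV_radius_inside, asin_coef_radius, Ht).
  pose proof (PSeries_correct _ _ E) as H. rewrite asin_series in H by auto.
  eapply is_lim_seq_ext; [|exact H].
  intro N. rewrite <- sum_n_rsum. apply sum_n_ext. intro k.
  rewrite pow_n_pow. unfold scal; simpl. unfold mult; simpl. ring.
Qed.

Lemma isqrt_coef_even_lower k : / INR (k + 1) <= isqrt_coef (2 * k).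
Proof.
  induction k as [|k IH]; [simpl; lra|].
  replace (2 * S k)%nat with (S (S (2 * k))) by lia.
  change (isqrt_coef (S (S (2 * k))))
    with (isqrt_coef (2 * k) * INR (S (2 * k)) / INR (S (S (2 * k)))).
  replace (INR (S (2 * k))) with (2 * INR k + 1) by (rewrite S_INR, mult_INR; simpl; ring).
  replace (INR (S (S (2 * k)))) with (2 * INR k + 2) by (rewrite !S_INR, mult_INR; simpl; ring).
  replace (INR (S k + 1)) with (INR k + 2) by (rewrite plus_INR, S_INR; simpl; ring).
  replace (INR (k + 1)) with (INR k + 1) in IH by (rewrite plus_INR; simpl; ring).
  pose proof (pos_INR k).
  apply Rle_trans with (/ (INR k + 1) * (2 * INR k + 1) / (2 * INR k + 2)).
  - apply (Rmult_le_reg_r ((INR k + 2) * (INR k + 1) * (2 * INR k + 2))); [nra|].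
    field_simplify; lra.
  - unfold Rdiv. apply Rmult_le_compat_r; [left; apply Rinv_0_lt_compat; lra|].
    apply Rmult_le_compat_r; lra.
Qed.

Lemma asin_coef_odd_constant k :
  let c := / (2 * PI) * asin_coef (S (2 * k)) in
  0 < c /\ 1 <= 9 * INR (2 * S k) * INR (2 * S k) * c.
Proof.
  intros c. unfold c, asin_coef.
  pose proof (isqrt_coef_even_lower k) as Hb. pose proof (pos_INR k).
  pose proof PI_4. pose proof PI_RGT_0.
  replace (INR (2 * S k)) with (2 * INR k + 2) by (rewrite mult_INR, (S_INR k); simpl; ring).
  replace (INR (S (2 * k))) with (2 * INR k + 1) by (rewrite S_INR, mult_INR; simpl; ring).
  replace (INR (k + 1)) with (INR k + 1) in Hb by (rewrite plus_INR; simpl; ring).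
  assert (Hlow : / (2 * PI) * (/ (INR k + 1) / (2 * INR k + 1))
                 <= / (2 * PI) * (isqrt_coef (2 * k) / (2 * INR k + 1))).
  { apply Rmult_le_compat_l; [left; apply Rinv_0_lt_compat; lra|].
    apply Rmult_le_compat_r; [left; apply Rinv_0_lt_compat; lra | exact Hb]. }
  replace (/ (2 * PI) * (/ (INR k + 1) / (2 * INR k + 1)))
    with (/ (2 * PI * (INR k + 1) * (2 * INR k + 1))) in Hlow by (field; lra).
  assert (HD : 0 < 2 * PI * (INR k + 1) * (2 * INR k + 1)) by (apply Rmult_lt_0_compat; nra).
  pose proof (Rinv_0_lt_compat _ HD).
  split; [lra|].
  apply Rle_trans with (9 * (2 * INR k + 2) * (2 * INR k + 2) * / (2 * PI * (INR k + 1) * (2 * INR k + 1))).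
  - apply (Rmult_le_reg_r _ _ _ HD).
    replace (9 * (2 * INR k + 2) * (2 * INR k + 2) * / (2 * PI * (INR k + 1) * (2 * INR k + 1))
             * (2 * PI * (INR k + 1) * (2 * INR k + 1)))
      with (9 * (2 * INR k + 2) * (2 * INR k + 2)) by (field; lra).
    nra.
  - apply Rmult_le_compat_l; nra.
Qed.

(* r_N = cos(1/(N+1)) increases to 1 and asin r_N = PI/2 - 1/(N+1). *)
Definition radial (N : nat) : R := cos (/ INR (N + 1)).

Lemma inv_succ_bounds N : 0 < / INR (N + 1) <= 1.
Proof.
  assert (1 <= INR (N + 1)) by (replace 1 with (INR 1) by reflexivity; apply le_INR; lia).
  split; [apply Rinv_0_lt_compat; lra|].
  rewrite <- Rinv_1. apply Rinv_le_contravar; lra.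
Qed.

Lemma inv_succ_lim : is_lim_seq (fun N => / INR (N + 1)) 0.
Proof.
  apply (is_lim_seq_incr_n (fun n => / INR n) 1 0).
  exact (is_lim_seq_inv INR p_infty is_lim_seq_INR ltac:(discriminate)).
Qed.

Lemma radial_bounds N : 0 < radial N < 1.
Proof.
  unfold radial. pose proof (inv_succ_bounds N). pose proof PI2_1. split.
  - apply cos_gt_0; lra.
  - rewrite <- cos_0. apply cos_decreasing_1; lra.
Qed.

Lemma radial_lim : is_lim_seq radial 1.
Proof.
  unfold radial. rewrite <- cos_0.
  apply is_lim_seq_continuous; [apply continuity_cos | apply inv_succ_lim].
Qed.

Lemma asin_radial N : asin (radial N) = PI / 2 - / INR (N + 1).
Proof.
  unfold radial. rewrite <- sin_shift. apply asin_sin.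
  pose proof (inv_succ_bounds N). pose proof PI2_1. lra.
Qed.

Lemma asin_radial_lim_one : is_lim_seq (fun N => asin (radial N)) (PI / 2).
Proof.
  apply (is_lim_seq_ext (fun N => PI / 2 - / INR (N + 1))).
  { intro N. symmetry. apply asin_radial. }
  pose proof (is_lim_seq_minus' _ _ _ _ (is_lim_seq_const (PI / 2)) inv_succ_lim) as H.
  rewrite Rminus_0_r in H. exact H.
Qed.

(* asin(r_N t) -> asin t on the closed interval: by continuity inside, and by
   the explicit value of asin r_N at the endpoints. *)
Lemma asin_radial_lim t : -1 <= t <= 1 ->
  is_lim_seq (fun N => asin (radial N * t)) (asin t).
Proof.
  intros Ht.
  destruct (Req_dec t 1) as [->|H1].
  - rewrite asin_1. eapply is_lim_seq_ext; [|exact asin_radial_lim_one].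
    intro N. rewrite Rmult_1_r. reflexivity.
  - destruct (Req_dec t (-1)) as [->|H2].
    + replace (-1) with (- (1)) by ring. rewrite asin_opp, asin_1.
      eapply is_lim_seq_ext; [|exact (proj1 (is_lim_seq_opp _ _) asin_radial_lim_one)].
      intro N. replace (radial N * - (1)) with (- radial N) by ring. rewrite asin_opp. reflexivity.
    + apply is_lim_seq_continuous.
      * apply derivable_continuous_pt, derivable_pt_asin. lra.
      * pose proof (is_lim_seq_mult' _ _ _ _ radial_lim (is_lim_seq_const t)) as H.
        rewrite Rmult_1_l in H. exact H.
Qed.

Section ArcsineGramForm.

Variables (d n : nat) (z : nat -> nat -> R) (v : nat -> R).

Hypothesis cos_bound :
  forall i j, (i < n)%nat -> (j < n)%nat -> -1 <= dot d (z i) (z j) <= 1.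

Definition kernel_form (f : R -> R) : R :=
  rsum n (fun i => rsum n (fun j =>
    v i * v j * (dot d (z i) (z j) * f (dot d (z i) (z j))))).

Lemma kernel_form_partial_sum r M :
  kernel_form (fun t => rsum M (fun k => asin_coef k * (r * t) ^ k))
  = rsum M (fun k => asin_coef k * r ^ k * gram_power d (S k) n z v).
Proof.
  unfold kernel_form, gram_power.
  rewrite (rsum_ext n _ (fun i => rsum M (fun k => rsum n (fun j =>
      asin_coef k * r ^ k * (v i * v j * dot d (z i) (z j) ^ S k))))).
  - rewrite rsum_swap. apply rsum_ext. intros k _.
    rewrite <- rsum_scal. apply rsum_ext. intros i _. apply rsum_scal.
  - intros i _. rewrite <- rsum_swap. apply rsum_ext. intros j _.
    rewrite <- rsum_scal, <- rsum_scal. apply rsum_ext. intros k _.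
    rewrite Rpow_mult_distr. simpl pow. ring.
Qed.

(* For 0 < r < 1 the series of asin(r t) converges, and all its terms
   a_k r^k Q_(k+1)(v) are nonnegative, so each one is below the limit. *)
Lemma kernel_form_dominates_radial m r : 0 < r < 1 ->
  asin_coef m * r ^ m * gram_power d (S m) n z v <= kernel_form (fun t => asin (r * t)).
Proof.
  intros Hr.
  assert (Hlim : is_lim_seq
    (fun M => kernel_form (fun t => rsum (S M) (fun k => asin_coef k * (r * t) ^ k)))
    (kernel_form (fun t => asin (r * t)))).
  { apply is_lim_seq_rsum. intros i Hi. apply is_lim_seq_rsum. intros j Hj.
    pose proof (cos_bound i j Hi Hj).
    apply is_lim_seq_const_mul, is_lim_seq_const_mul, asin_partial_sums. split; nra. }
  apply (is_lim_seq_incr_n _ m) in Hlim.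
  refine (is_lim_seq_le _ _ _ _ _ (is_lim_seq_const _) Hlim).
  intro M. rewrite kernel_form_partial_sum.
  apply (rsum_ge_term (S (M + m)) (fun k => asin_coef k * r ^ k * gram_power d (S k) n z v));
    [|lia].
  intros k _. pose proof (asin_coef_bounds k).
  apply Rmult_le_pos; [apply Rmult_le_pos; [lra | apply pow_le; lra]|].
  apply gram_power_nonneg.
Qed.

(* Letting r -> 1: a_m Q_(m+1)(v) <= sum_ij v_i v_j t_ij asin(t_ij). *)
Lemma kernel_form_dominates m :
  asin_coef m * gram_power d (S m) n z v <= kernel_form asin.
Proof.
  assert (Hlim : is_lim_seq (fun N => kernel_form (fun t => asin (radial N * t)))
                            (kernel_form asin)).
  { apply is_lim_seq_rsum. intros i Hi. apply is_lim_seq_rsum. intros j Hj.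
    apply is_lim_seq_const_mul, is_lim_seq_const_mul, asin_radial_lim, cos_bound; auto. }
  assert (Hpow : is_lim_seq (fun N => asin_coef m * radial N ^ m * gram_power d (S m) n z v)
                            (asin_coef m * 1 ^ m * gram_power d (S m) n z v)).
  { apply is_lim_seq_mult'; [apply is_lim_seq_const_mul | apply is_lim_seq_const].
    apply (is_lim_seq_continuous (fun x => x ^ m)); [|exact radial_lim].
    apply derivable_continuous_pt, derivable_pt_pow. }
  rewrite pow1, Rmult_1_r in Hpow.
  exact (is_lim_seq_le _ _ _ _
    (fun N => kernel_form_dominates_radial m (radial N) (radial_bounds N)) Hpow Hlim).
Qed.

End ArcsineGramForm.

(* Since acos t = PI/2 - asin t, H_ij = t/4 + t asin(t)/(2 PI). *)
Lemma Hinf_asin d x i j : -1 <= dot d (x i) (x j) <= 1 ->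
  Hinf d x i j
  = / 4 * dot d (x i) (x j) + / (2 * PI) * (dot d (x i) (x j) * asin (dot d (x i) (x j))).
Proof.
  intros Hb. unfold Hinf. rewrite acos_asin by auto.
  pose proof PI_RGT_0. field. lra.
Qed.

Section KernelForm.

Variables (d n : nat) (x : nat -> nat -> R) (v : nat -> R).

Hypothesis cos_bound :
  forall i j, (i < n)%nat -> (j < n)%nat -> -1 <= dot d (x i) (x j) <= 1.

Lemma Hinf_form_decomp :
  rsum n (fun i => rsum n (fun j => v i * Hinf d x i j * v j))
  = / 4 * gram_power d 1 n x v + / (2 * PI) * kernel_form d n x v asin.
Proof.
  unfold gram_power, kernel_form. rewrite <- !rsum_scal, <- rsum_plus.
  apply rsum_ext. intros i Hi. rewrite <- !rsum_scal, <- rsum_plus.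
  apply rsum_ext. intros j Hj. rewrite Hinf_asin by auto. ring.
Qed.

(* Both summands are nonnegative, so v^T H v >= Q_1(v)/4 ... *)
Lemma Hinf_form_ge_linear :
  / 4 * gram_power d 1 n x v <= rsum n (fun i => rsum n (fun j => v i * Hinf d x i j * v j)).
Proof.
  rewrite Hinf_form_decomp.
  pose proof (kernel_form_dominates d n x v cos_bound 0) as H. simpl asin_coef in H.
  assert (0 < / (2 * PI)) by (apply Rinv_0_lt_compat; pose proof PI_RGT_0; lra).
  pose proof (gram_power_nonneg d 1 n x v). nra.
Qed.

Lemma Hinf_form_ge_power m :
  / (2 * PI) * asin_coef m * gram_power d (S m) n x v
  <= rsum n (fun i => rsum n (fun j => v i * Hinf d x i j * v j)).
Proof.
  rewrite Hinf_form_decomp.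
  pose proof (kernel_form_dominates d n x v cos_bound m).
  assert (0 < / (2 * PI)) by (apply Rinv_0_lt_compat; pose proof PI_RGT_0; lra).
  pose proof (gram_power_nonneg d 1 n x v). nra.
Qed.

End KernelForm.

Definition matvec (n : nat) (G : nat -> nat -> R) (y : nat -> R) (i : nat) : R :=
  rsum n (fun j => G i j * y j).

Lemma inverse_quad_form n H G y : is_inverse n H G ->
  quad n G y = rsum n (fun i => matvec n G y i * y i) /\
  quad n G y = rsum n (fun i => rsum n (fun j =>
                 matvec n G y i * H i j * matvec n G y j)).
Proof.
  intros Hinv. set (v := matvec n G y).
  assert (Hv : forall i, (i < n)%nat -> rsum n (fun k => H i k * v k) = y i).
  { intros i Hi. unfold v, matvec.
    rewrite (rsum_ext n _ (fun k => rsum n (fun j => H i k * G k j * y j))).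
    2: { intros k _. rewrite <- rsum_scal. apply rsum_ext. intros; ring. }
    rewrite rsum_swap, <- (rsum_delta n i y Hi). apply rsum_ext. intros j Hj.
    rewrite <- (proj1 (Hinv i j Hi Hj)), Rmult_comm, <- rsum_scal.
    apply rsum_ext. intros; ring. }
  assert (Hvy : quad n G y = rsum n (fun i => v i * y i)).
  { unfold quad. apply rsum_ext. intros i _.
    unfold v, matvec. rewrite Rmult_comm, <- rsum_scal. apply rsum_ext. intros; ring. }
  split; [exact Hvy|].
  rewrite Hvy. apply rsum_ext. intros i Hi.
  rewrite <- (Hv i Hi), <- rsum_scal. apply rsum_ext. intros; ring.
Qed.

(* Nonnegativity of Q_p at the points x_1..x_n, beta with weights v_1..v_n, -s:
   2 s sum_i v_i (beta.x_i)^p <= Q_p(v) + s^2 (beta.beta)^p. *)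
Lemma gram_power_extra_point d n (x : nat -> nat -> R) beta v p s :
  2 * s * rsum n (fun i => v i * dot d beta (x i) ^ p)
  <= gram_power d p n x v + s * s * dot d beta beta ^ p.
Proof.
  set (z := fun i => if Nat.ltb i n then x i else beta).
  set (w := fun i => if Nat.ltb i n then v i else - s).
  assert (Hz : forall i, (i < n)%nat -> z i = x i /\ w i = v i).
  { intros i Hi. unfold z, w. rewrite (proj2 (Nat.ltb_lt i n) Hi). auto. }
  assert (Hn : z n = beta /\ w n = - s) by (unfold z, w; rewrite Nat.ltb_irrefl; auto).
  pose proof (gram_power_nonneg d p (S n) z w) as H. unfold gram_power in H.
  cbn [rsum] in H. destruct Hn as [Hzn Hwn]. rewrite Hzn, Hwn in H.
  rewrite (rsum_ext n _ (fun i => rsum n (fun j => v i * v j * dot d (x i) (x j) ^ p)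
      + (- s) * (v i * dot d beta (x i) ^ p))) in H.
  2: { intros i Hi. destruct (Hz i Hi) as [-> ->]. rewrite dot_sym.
       f_equal; [|ring]. apply rsum_ext. intros j Hj. destruct (Hz j Hj) as [-> ->]. auto. }
  rewrite (rsum_ext n (fun j => - s * w j * dot d beta (z j) ^ p)
     (fun j => (- s) * (v j * dot d beta (x j) ^ p))) in H.
  2: { intros j Hj. destruct (Hz j Hj) as [-> ->]. ring. }
  rewrite rsum_plus, !rsum_scal in H. unfold gram_power. nra.
Qed.

(* Optimising the extra-point inequality at s = alpha/c:
   if q = alpha A, c S <= q and 2 s A <= S + s^2 B for all s, then q <= alpha^2 B / c. *)
Lemma quadratic_optimisation q S A alpha B c :
  0 < c -> q = alpha * A -> c * S <= q ->
  (forall s, 2 * s * A <= S + s * s * B) -> q <= alpha * alpha * B / c.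
Proof.
  intros Hc Hq HS Hs. pose proof (Hs (alpha / c)) as H.
  apply (Rmult_le_compat_l c) in H; [|lra].
  replace (c * (2 * (alpha / c) * A)) with (2 * q) in H by (rewrite Hq; field; lra).
  replace (c * (S + alpha / c * (alpha / c) * B)) with (c * S + alpha * alpha * B / c) in H
    by (field; lra).
  lra.
Qed.

Lemma sqrt_form_bound d n (x : nat -> nat -> R) beta alpha p v q c :
  0 < c ->
  q = rsum n (fun i => v i * (alpha * dot d beta (x i) ^ p)) ->
  c * gram_power d p n x v <= q ->
  1 <= 9 * INR p * INR p * c ->
  sqrt q <= 3 * INR p * Rabs alpha * norm2 d beta ^ p.
Proof.
  intros Hc Hq Hcq H9.
  set (B := dot d beta beta ^ p).
  assert (HB : 0 <= B) by (apply pow_le, dot_nonneg).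
  assert (Hq' : q <= alpha * alpha * B / c).
  { apply (quadratic_optimisation q (gram_power d p n x v)
             (rsum n (fun i => v i * dot d beta (x i) ^ p)) alpha B c Hc); auto.
    - rewrite Hq, <- rsum_scal. apply rsum_ext. intros; ring.
    - intro s. apply gram_power_extra_point. }
  assert (Hnorm : norm2 d beta ^ p * norm2 d beta ^ p = B).
  { unfold B, norm2. rewrite <- Rpow_mult_distr, sqrt_sqrt by apply dot_nonneg. reflexivity. }
  assert (Habs : Rabs alpha * Rabs alpha = alpha * alpha)
    by (rewrite <- Rabs_mult; apply Rabs_pos_eq; nra).
  assert (Hbound : alpha * alpha * B / c <= 9 * INR p * INR p * (alpha * alpha * B)).
  { apply Rle_div_l; [lra|]. pose proof (Rmult_le_pos _ _ (Rle_0_sqr alpha) HB).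
    unfold Rsqr in *. nra. }
  assert (Hnn : 0 <= 3 * INR p * Rabs alpha * norm2 d beta ^ p).
  { pose proof (pos_INR p). pose proof (Rabs_pos alpha). pose proof (pow_le _ p (sqrt_pos (dot d beta beta))).
    unfold norm2. apply Rmult_le_pos; [apply Rmult_le_pos|]; lra. }
  rewrite <- (sqrt_square _ Hnn). apply sqrt_le_1_alt.
  replace ((3 * INR p * Rabs alpha * norm2 d beta ^ p) * (3 * INR p * Rabs alpha * norm2 d beta ^ p))
    with (9 * INR p * INR p * (Rabs alpha * Rabs alpha) * (norm2 d beta ^ p * norm2 d beta ^ p))
    by ring.
  rewrite Habs, Hnorm. lra.
Qed.

Theorem theorem6p1 (n d : nat) (x : nat -> nat -> R) (y : nat -> R)
  (alpha : R) (beta : nat -> R) (p : nat) (Hinv : nat -> nat -> R) :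
  (forall i, (i < n)%nat -> norm2 d (x i) = 1) ->
  pos_def n (Hinf d x) ->
  (p = 1%nat \/ exists l : nat, (1 <= l)%nat /\ p = (2 * l)%nat) ->
  (forall i, (i < n)%nat -> y i = alpha * (dot d beta (x i)) ^ p) ->
  is_inverse n (Hinf d x) Hinv ->
  sqrt (quad n Hinv y) <= 3 * INR p * Rabs alpha * (norm2 d beta) ^ p.
Proof.
  intros Hunit _ Hp Hy Hinverse.
  assert (Hcos : forall i j, (i < n)%nat -> (j < n)%nat -> -1 <= dot d (x i) (x j) <= 1)
    by (intros; apply dot_unit_bound; auto).
  set (v := matvec n Hinv y).
  destruct (inverse_quad_form n (Hinf d x) Hinv y Hinverse) as [Hq_vy Hq_H].
  assert (Hq_target : quad n Hinv y = rsum n (fun i => v i * (alpha * dot d beta (x i) ^ p))).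
  { rewrite Hq_vy. apply rsum_ext. intros i Hi. rewrite Hy; auto. }
  destruct Hp as [-> | [l [Hl ->]]].
  - apply (sqrt_form_bound d n x beta alpha 1 v _ (/ 4)); auto; [lra| |simpl; lra].
    rewrite Hq_H. apply Hinf_form_ge_linear, Hcos.
  - destruct l as [|k]; [lia|].
    destruct (asin_coef_odd_constant k) as [Hc H9].
    apply (sqrt_form_bound d n x beta alpha _ v _ _ Hc Hq_target); [|exact H9].
    replace (2 * S k)%nat with (S (S (2 * k))) by lia.
    rewrite Hq_H. apply Hinf_form_ge_power, Hcos.
Qed.
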